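(* Let $h>0$, let $\phi_h(x)=\frac{1}{\sqrt{2\pi h}}e^{-x^2/(2h)}$ for $x\in\mathbb{R}$, and for an integer $C$ let $\tilde\phi_h(x)=\sum_{j\in\mathbb{Z}}\phi_h(x+2\pi j)$ and $\tilde\phi_h^{(C)}(x)=\sum_{|j|\le C}\phi_h(x+2\pi j)$. For points $x_1,\dots,x_n\in[-\pi,\pi]$ and the empirical measure $\nu=\frac1n\sum_{i=1}^n\delta_{x_i}$, set $(\tilde\phi_h*\nu)(x)=\frac1n\sum_{i=1}^n\tilde\phi_h(x-x_i)$ and $(\tilde\phi_h^{(C)}*\nu)(x)=\frac1n\sum_{i=1}^n\tilde\phi_h^{(C)}(x-x_i)$ for $x\in[-\pi,\pi]$. If $2\pi(C-1)\ge\sqrt h$, then $$\sup_{x\in[-\pi,\pi]}\Big|\frac{\partial(\tilde\phi_h*\nu)}{\partial x}(x)-\frac{\partial(\tilde\phi_h^{(C)}*\nu)}{\partial x}(x)\Big|\le\frac1\pi\,\phi_h\big(2\pi(C-1)\big).$$ *)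

From Stdlib Require Import Reals ZArith List.
From Coquelicot Require Import Coquelicot.
Open Scope R_scope.

Definition phi (h x : R) : R := / sqrt (2 * PI * h) * exp (- x ^ 2 / (2 * h)).

(* Periodized kernel: sum over j in Z of phi_h(x + 2 pi j), written as the
   sum of the series over j >= 0 and over j <= -1. *)
Definition phi_per (h x : R) : R :=
  Series (fun k : nat => phi h (x + 2 * PI * INR k))
  + Series (fun k : nat => phi h (x - 2 * PI * INR (S k))).

(* Truncated periodization: sum over integers j with |j| <= C
   (empty sum, i.e. 0, when C < 0). *)
Definition phi_trunc (h : R) (C : Z) (x : R) : R :=
  if (C <? 0)%Z then 0
  else sum_n (fun k : nat => phi h (x + 2 * PI * IZR (Z.of_nat k - C)))
             (2 * Z.to_nat C).

Definition conv_emp (K : R -> R) (n : nat) (xs : nat -> R) (x : R) : R :=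
  / INR n * sum_n (fun i : nat => K (x - xs i)) (pred n).

From Stdlib Require Import Reals ZArith Lra Lia Psatz.
From Coquelicot Require Import Coquelicot.
Open Scope R_scope.

(* Differentiating term by term, the derivative of the periodized kernel minus that of
   the truncated one is, at each [y = x - x_i] in [[-2 pi, 2 pi]], a sum of two tails
   [sum_(k >= 0) phi_h'(+-y + 2 pi (C + 1 + k))].  On [[sqrt h, +oo)] the Gaussian is
   convex, so the tangent-line inequality [2 pi |phi_h'(u)| <= phi_h(u - 2 pi) - phi_h(u)]
   makes each tail telescope to at most [phi_h(2 pi (C - 1)) / (2 pi)].  The same
   domination gives the locally uniform convergence of the differentiated series that
   justifies differentiating term by term. *)

Definition dphi (h u : R) : R := - u / h * phi h u.

Lemma exp_ge_quadratic z : 0 <= z -> 1 + z + z ^ 2 / 2 <= exp z.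
Proof. intros Hz; generalize (exp_ge_taylor z 2 Hz); simpl; lra. Qed.

Lemma phi_even h u : phi h (- u) = phi h u.
Proof. unfold phi; do 3 f_equal; ring. Qed.

Lemma dphi_odd h u : dphi h (- u) = - dphi h u.
Proof. unfold dphi; rewrite phi_even; unfold Rdiv; ring. Qed.

Lemma series_nonneg_bounded (a : nat -> R) B :
  (forall k, 0 <= a k) -> (forall N, sum_n a N <= B) -> ex_series a /\ Series a <= B.
Proof.
  intros Ha HB.
  assert (Hincr : forall N, sum_n a N <= sum_n a (S N)).
  { intros N; rewrite sum_Sn; change plus with Rplus; specialize (Ha (S N)); lra. }
  destruct (ex_finite_lim_seq_incr _ _ Hincr HB) as [l Hl].
  split; [now exists l|].
  rewrite (is_series_unique a l Hl).
  exact (is_lim_seq_le _ _ _ _ HB Hl (is_lim_seq_const B)).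
Qed.

Lemma exists_shift_ge T y B : 0 < T -> exists K : nat, B <= y + T * INR K.
Proof.
  intros HT; destruct (INR_unbounded ((B - y) / T)) as [K HK]; exists K.
  apply (Rmult_gt_compat_l T) in HK; [|easy].
  replace (T * ((B - y) / T)) with (B - y) in HK by (field; lra); lra.
Qed.

Lemma is_derive_shift (F F' : R -> R) a x :
  (forall w, is_derive F w (F' w)) -> is_derive (fun t => F (t + a)) x (F' (x + a)).
Proof.
  intros HF; rewrite <- (Rmult_1_l (F' (x + a))).
  apply (is_derive_comp F (fun t => t + a)); [apply HF|auto_derive; [easy|ring]].
Qed.

Lemma sum_n_symmetric_split (f : R -> R) T y c :
  sum_n (fun k => f (y + T * (INR k - INR c))) (2 * c) + f (y - T * INR (S c)) =
  sum_n (fun k => f (y + T * INR k)) c + sum_n (fun k => f (y - T * INR (S k))) c.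
Proof.
  induction c as [|c IH].
  - rewrite !sum_O; simpl INR; f_equal; f_equal; ring.
  - replace (2 * S c)%nat with (S (S (2 * c))) by lia.
    rewrite sum_Sn; unfold sum_n at 1; rewrite sum_Sn_m by lia; rewrite <- sum_n_m_S.
    rewrite (sum_n_m_ext _ (fun k => f (y + T * (INR k - INR c)))) by
      (intros k; f_equal; rewrite !S_INR; ring).
    change (sum_n_m ?u 0 (2 * c)) with (sum_n u (2 * c)).
    rewrite !(sum_Sn _ c); change plus with Rplus.
    replace (y + T * (INR 0 - INR (S c))) with (y - T * INR (S c)) by (simpl INR; ring).
    replace (y + T * (INR (S (S (2 * c))) - INR (S c))) with (y + T * INR (S c))
      by (rewrite !S_INR, mult_INR; simpl INR; ring).
    lra.
Qed.

Lemma two_sided_Series_sub_symmetric_sum (f : R -> R) T y c :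
  ex_series (fun k => f (y + T * INR k)) ->
  ex_series (fun k => f (y - T * INR (S k))) ->
  Series (fun k => f (y + T * INR k)) + Series (fun k => f (y - T * INR (S k)))
  - sum_n (fun k => f (y + T * (INR k - INR c))) (2 * c)
  = Series (fun k => f (y + T * INR (S c) + T * INR k))
    + Series (fun k => f (y - T * INR (S c) - T * INR k)).
Proof.
  intros Hfwd Hbwd.
  rewrite (Series_incr_n _ (S c) ltac:(lia) Hfwd), (Series_incr_n _ (S c) ltac:(lia) Hbwd).
  simpl pred; rewrite <- !sum_n_Reals.
  rewrite (Series_incr_1 (fun k => f (y - T * INR (S c) - T * INR k))).
  2: { apply (ex_series_ext (fun k => f (y - T * INR (S (c + k))))).
       - intros k; replace (S (c + k)) with (S c + k)%nat by lia; rewrite plus_INR; f_equal; ring.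
       - apply (ex_series_incr_n (fun k => f (y - T * INR (S k))) c), Hbwd. }
  rewrite (Series_ext (fun k => f (y + T * INR (S c + k)))
                      (fun k => f (y + T * INR (S c) + T * INR k)))
    by (intros k; f_equal; rewrite plus_INR; ring).
  rewrite (Series_ext (fun k => f (y - T * INR (S (S c + k))))
                      (fun k => f (y - T * INR (S c) - T * INR (S k))))
    by (intros k; replace (S (S c + k)) with (S c + S k)%nat by lia;
        rewrite plus_INR; f_equal; ring).
  pose proof (sum_n_symmetric_split f T y c).
  simpl INR at 3; rewrite Rmult_0_r, Rminus_0_r.
  lra.
Qed.

Section Gaussian.

Variable h : R.
Hypothesis h_pos : 0 < h.

Lemma phi_pos u : 0 < phi h u.
Proof.
  unfold phi; apply Rmult_lt_0_compat; [|apply exp_pos].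
  apply Rinv_0_lt_compat, sqrt_lt_R0; pose proof PI_RGT_0; nra.
Qed.

Lemma phi_ratio u v : phi h u = phi h v * exp ((v ^ 2 - u ^ 2) / (2 * h)).
Proof.
  unfold phi; rewrite (Rmult_assoc (/ _)), <- exp_plus; do 2 f_equal; field; lra.
Qed.

Lemma is_derive_phi u : is_derive (phi h) u (dphi h u).
Proof.
  assert (sqrt (2 * PI * h) <> 0).
  { apply Rgt_not_eq, sqrt_lt_R0; pose proof PI_RGT_0; nra. }
  unfold phi, dphi; auto_derive; [easy|].
  unfold phi; replace (- (u * (u * 1)) * / (2 * h)) with (- u ^ 2 / (2 * h)) by (field; lra).
  field; lra.
Qed.

Lemma dphi_nonpos u : 0 <= u -> dphi h u <= 0.
Proof.
  intros Hu; unfold dphi; pose proof (phi_pos u).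
  assert (0 <= u / h) by (apply Rdiv_le_0_compat; lra); nra.
Qed.

Lemma phi_le_dphi u : sqrt h <= u -> phi h u <= - sqrt h * dphi h u.
Proof.
  intros Hu; pose proof (sqrt_sqrt h (Rlt_le _ _ h_pos)); pose proof (sqrt_pos h).
  pose proof (phi_pos u).
  replace (- sqrt h * dphi h u) with (sqrt h * u / h * phi h u) by (unfold dphi; field; lra).
  assert (1 <= sqrt h * u / h); [|nra].
  apply (Rmult_le_reg_r h); [lra|]; unfold Rdiv; rewrite Rmult_assoc, Rinv_l; nra.
Qed.

(* On [sqrt h, +oo) the Gaussian is convex, so its slope increases. *)
Lemma dphi_increasing u v : sqrt h <= u <= v -> dphi h u <= dphi h v.
Proof.
  intros Huv; pose proof (sqrt_sqrt h (Rlt_le _ _ h_pos)); pose proof (sqrt_pos h).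
  set (z := (v ^ 2 - u ^ 2) / (2 * h)).
  assert (Hz : z * (2 * h) = (v - u) * (v + u)) by (unfold z; field; lra).
  assert (Hv : v <= u * (1 + z)).
  { apply (Rmult_le_reg_l (2 * h)); [lra|].
    replace (2 * h * (u * (1 + z))) with (2 * h * u + u * (z * (2 * h))) by ring.
    rewrite Hz.
    assert (h <= u * u) by nra.
    assert (0 <= (v - u) * (u * (v + u) - 2 * h)) by (apply Rmult_le_pos; nra).
    nra. }
  pose proof (exp_ineq1_le z); pose proof (phi_pos v).
  assert (Hexp : v * phi h v <= u * phi h u).
  { rewrite (phi_ratio u v); fold z.
    assert (v <= u * exp z) by (apply (Rle_trans _ _ _ Hv), Rmult_le_compat_l; lra).
    nra. }
  unfold dphi, Rdiv; pose proof (Rinv_0_lt_compat h h_pos); nra.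
Qed.

(* Tangent-line inequality on the convex part [sqrt h, +oo) of the Gaussian. *)
Lemma phi_sub_ge_dphi T u :
  0 < T -> sqrt h <= u - T -> - T * dphi h u <= phi h (u - T) - phi h u.
Proof.
  intros HT Hu; pose proof (sqrt_sqrt h (Rlt_le _ _ h_pos)); pose proof (sqrt_pos h).
  rewrite (phi_ratio (u - T) u).
  set (z := (u ^ 2 - (u - T) ^ 2) / (2 * h)).
  assert (Hz : z * h = T * (u - T / 2)) by (unfold z; field; lra).
  assert (Hw : h <= (u - T / 2) ^ 2) by nra.
  assert (0 <= z) by (apply (Rmult_le_reg_r h); nra).
  pose proof (exp_ge_quadratic z ltac:(lra)); pose proof (phi_pos u).
  assert (T * u / h <= z + z ^ 2 / 2).
  { apply (Rmult_le_reg_r (h * h)); [nra|].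
    replace ((z + z ^ 2 / 2) * (h * h)) with ((z * h) * h + (z * h) ^ 2 / 2) by (field; lra).
    replace (T * u / h * (h * h)) with (T * u * h) by (field; lra).
    rewrite Hz; nra. }
  replace (- T * dphi h u) with (T * u / h * phi h u) by (unfold dphi; field; lra).
  nra.
Qed.

End Gaussian.

Definition phi_half (h T z : R) : R := Series (fun k => phi h (z + T * INR k)).
Definition dphi_half (h T z : R) : R := Series (fun k => dphi h (z + T * INR k)).

Section Periodization.

Variables h T : R.
Hypothesis h_pos : 0 < h.
Hypothesis T_pos : 0 < T.

Lemma Rabs_dphi_decreasing u v : sqrt h <= u <= v -> Rabs (dphi h v) <= Rabs (dphi h u).
Proof.
  intros Huv; pose proof (sqrt_pos h).
  rewrite !Rabs_left1 by (apply (dphi_nonpos h h_pos); lra).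
  pose proof (dphi_increasing h h_pos u v Huv); lra.
Qed.

Lemma sum_n_abs_dphi_telescope v N : sqrt h <= v - T ->
  T * sum_n (fun k => Rabs (dphi h (v + T * INR k))) N <= phi h (v - T) - phi h (v + T * INR N).
Proof.
  intros Hv; pose proof (sqrt_pos h).
  induction N as [|N IH].
  - rewrite sum_O, Rabs_left1 by (apply (dphi_nonpos h h_pos); simpl; lra).
    simpl INR; rewrite Rmult_0_r, Rplus_0_r.
    pose proof (phi_sub_ge_dphi h h_pos T v T_pos Hv); lra.
  - rewrite sum_Sn; change plus with Rplus.
    pose proof (pos_INR N).
    assert (Hstep := phi_sub_ge_dphi h h_pos T (v + T * INR (S N)) T_pos).
    replace (v + T * INR (S N) - T) with (v + T * INR N) in Hstep by (rewrite S_INR; ring).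
    rewrite (Rabs_left1 (dphi h _)) by (apply (dphi_nonpos h h_pos); rewrite S_INR; nra).
    assert (Hprev : sqrt h <= v + T * INR N) by nra.
    specialize (Hstep Hprev); nra.
Qed.

Lemma abs_dphi_series_bounded v : sqrt h <= v - T ->
  ex_series (fun k => Rabs (dphi h (v + T * INR k))) /\
  Series (fun k => Rabs (dphi h (v + T * INR k))) <= phi h (v - T) / T.
Proof.
  intros Hv; apply series_nonneg_bounded; [intros; apply Rabs_pos|intros N].
  pose proof (sum_n_abs_dphi_telescope v N Hv); pose proof (phi_pos h h_pos (v + T * INR N)).
  apply (Rmult_le_reg_l T); [easy|].
  replace (T * (phi h (v - T) / T)) with (phi h (v - T)) by (field; lra); lra.
Qed.

Lemma Rabs_Series_dphi_le v x : sqrt h <= v - T -> v <= x ->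
  Rabs (Series (fun k => dphi h (x + T * INR k))) <= phi h (v - T) / T.
Proof.
  intros Hv Hx; destruct (abs_dphi_series_bounded v Hv) as [Hex Hle].
  assert (Hcmp : forall k, Rabs (dphi h (x + T * INR k)) <= Rabs (dphi h (v + T * INR k))).
  { intros k; pose proof (pos_INR k); apply Rabs_dphi_decreasing; nra. }
  assert (Hex' : ex_series (fun k => Rabs (dphi h (x + T * INR k)))).
  { apply (@ex_series_le _ R_CompleteNormedModule _ (fun k => Rabs (dphi h (v + T * INR k))));
      [|exact Hex].
    intros k; change norm with Rabs; rewrite Rabs_Rabsolu; auto. }
  eapply Rle_trans; [apply Series_Rabs, Hex'|].
  eapply Rle_trans; [|exact Hle].
  apply Series_le; [|easy]; intros k; split; [apply Rabs_pos|apply Hcmp].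
Qed.

Lemma ex_series_of_tail (a : R -> R) y :
  (forall v, sqrt h <= v - T -> ex_series (fun k => a (v + T * INR k))) ->
  ex_series (fun k => a (y + T * INR k)).
Proof.
  intros Ha; destruct (exists_shift_ge T y (sqrt h + T) T_pos) as [K HK].
  apply (ex_series_incr_n _ K).
  apply (ex_series_ext (fun k => a ((y + T * INR K) + T * INR k))); [|apply Ha; lra].
  intros k; f_equal; rewrite plus_INR; ring.
Qed.

Lemma ex_series_abs_dphi y : ex_series (fun k => Rabs (dphi h (y + T * INR k))).
Proof.
  apply (ex_series_of_tail (fun u => Rabs (dphi h u))); intros v Hv.
  apply (abs_dphi_series_bounded v Hv).
Qed.

Lemma ex_series_dphi y : ex_series (fun k => dphi h (y + T * INR k)).
Proof. apply ex_series_Rabs, ex_series_abs_dphi. Qed.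

Lemma ex_series_phi y : ex_series (fun k => phi h (y + T * INR k)).
Proof.
  apply (ex_series_of_tail (phi h)); intros v Hv.
  apply (@ex_series_le _ R_CompleteNormedModule _
           (fun k => sqrt h * Rabs (dphi h (v + T * INR k)))).
  - intros k; change norm with Rabs; pose proof (pos_INR k); pose proof (sqrt_pos h).
    rewrite Rabs_pos_eq by (apply Rlt_le, phi_pos, h_pos).
    rewrite Rabs_left1 by (apply (dphi_nonpos h h_pos); nra).
    replace (sqrt h * - dphi h (v + T * INR k)) with (- sqrt h * dphi h (v + T * INR k)) by ring.
    apply phi_le_dphi; nra.
  - destruct (ex_series_abs_dphi v) as [l Hl]; exists (sqrt h * l).
    exact (is_series_scal_l (sqrt h) _ _ Hl).
Qed.

(* The tail after [n] terms is dominated on [z - 1, +oo) by [phi (z - 1 + T n) / T],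
   the [n]-th term of a convergent series. *)
Lemma CVU_sum_dphi z :
  CVU (fun n x => sum_f_R0 (fun k => dphi h (x + T * INR k)) n) (dphi_half h T) z
      (mkposreal 1 Rlt_0_1).
Proof.
  intros eps Heps; set (y := z - 1).
  destruct (exists_shift_ge T y (sqrt h) T_pos) as [K HK].
  assert (Hlim := ex_series_lim_0 _ (ex_series_phi y)).
  apply is_lim_seq_spec in Hlim.
  destruct (Hlim (mkposreal (T * eps) ltac:(simpl; nra))) as [N HN]; simpl in HN.
  exists (K + N)%nat; intros n x Hn Hx.
  unfold Boule in Hx; simpl in Hx; apply Rabs_def2 in Hx.
  unfold dphi_half; rewrite (Series_incr_n _ (S n)) by (lia || apply ex_series_dphi).
  simpl pred.
  match goal with
  | |- Rabs (?s + ?tail - ?s) < _ => replace (s + tail - s) with tail by ring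
  end.
  rewrite (Series_ext _ (fun k => dphi h ((x + T * INR (S n)) + T * INR k)))
    by (intros k; f_equal; rewrite plus_INR; ring).
  assert (HKn : INR K <= INR n) by (apply le_INR; lia).
  eapply Rle_lt_trans; [apply (Rabs_Series_dphi_le (y + T * INR (S n)))|].
  - rewrite S_INR; nra.
  - unfold y; lra.
  - replace (y + T * INR (S n) - T) with (y + T * INR n) by (rewrite S_INR; ring).
    specialize (HN n ltac:(lia)); rewrite Rminus_0_r in HN.
    apply (Rmult_lt_reg_l T); [easy|].
    replace (T * (phi h (y + T * INR n) / T)) with (phi h (y + T * INR n)) by (field; lra).
    pose proof (Rle_abs (phi h (y + T * INR n))); lra.
Qed.

Lemma is_derive_phi_half z : is_derive (phi_half h T) z (dphi_half h T z).
Proof.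
  apply is_derive_Reals.
  apply (CVU_derivable (fun n x => sum_f_R0 (fun k => phi h (x + T * INR k)) n)
           (fun n x => sum_f_R0 (fun k => dphi h (x + T * INR k)) n) _ _ z
           (mkposreal 1 Rlt_0_1) (CVU_sum_dphi z)).
  - intros x _; apply is_series_Reals, Series_correct, ex_series_phi.
  - intros n x _; apply is_derive_Reals.
    apply (is_derive_ext (fun t => sum_n (fun k => phi h (t + T * INR k)) n));
      [intros t; apply sum_n_Reals|].
    rewrite <- sum_n_Reals.
    apply (@is_derive_sum_n _ R_NormedModule (fun k t => phi h (t + T * INR k))); intros k _.
    apply is_derive_shift, is_derive_phi, h_pos.
  - unfold Boule; simpl; rewrite Rminus_diag, Rabs_R0; lra.
Qed.

Lemma dphi_half_reflect y :
  dphi_half h T (T - y) = - Series (fun k => dphi h (y - T * INR (S k))).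
Proof.
  unfold dphi_half; rewrite <- Series_opp; apply Series_ext; intros k.
  rewrite <- dphi_odd; f_equal; rewrite S_INR; ring.
Qed.

Lemma Rabs_dphi_half_sub_trunc_le c y :
  sqrt h <= T * (INR c - 1) -> - T <= y <= T ->
  Rabs (dphi_half h T y - dphi_half h T (T - y)
        - sum_n (fun k => dphi h (y + T * (INR k - INR c))) (2 * c))
  <= 2 / T * phi h (T * (INR c - 1)).
Proof.
  intros Hc Hy; rewrite dphi_half_reflect.
  assert (Hbwd : ex_series (fun k => dphi h (y - T * INR (S k)))).
  { apply (ex_series_ext (fun k => - dphi h (T - y + T * INR k))).
    - intros k; rewrite <- dphi_odd; f_equal; rewrite S_INR; ring.
    - apply (@ex_series_opp R_AbsRing R_NormedModule), ex_series_dphi. }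
  unfold dphi_half.
  match goal with
  | |- Rabs (?a - - ?b - ?s) <= _ => replace (a - - b - s) with (a + b - s) by ring
  end.
  rewrite two_sided_Series_sub_symmetric_sum by (apply ex_series_dphi || exact Hbwd).
  rewrite (Series_ext (fun k => dphi h (y - T * INR (S c) - T * INR k))
                      (fun k => - dphi h (T * INR (S c) - y + T * INR k)))
    by (intros k; rewrite <- dphi_odd; f_equal; ring).
  rewrite Series_opp.
  assert (HcS : T * INR c <= T * INR (S c) - T) by (rewrite S_INR; lra).
  assert (Hfwd := Rabs_Series_dphi_le (T * INR c) (y + T * INR (S c))).
  assert (Hbwd' := Rabs_Series_dphi_le (T * INR c) (T * INR (S c) - y)).
  replace (T * INR c - T) with (T * (INR c - 1)) in Hfwd, Hbwd' by ring.
  specialize (Hfwd ltac:(lra) ltac:(lra)); specialize (Hbwd' ltac:(lra) ltac:(lra)).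
  eapply Rle_trans; [apply Rabs_triang|]; rewrite Rabs_Ropp.
  replace (2 / T * phi h (T * (INR c - 1)))
    with (phi h (T * (INR c - 1)) / T + phi h (T * (INR c - 1)) / T) by (field; lra).
  lra.
Qed.

End Periodization.

Lemma phi_per_half h x :
  phi_per h x = phi_half h (2 * PI) x + phi_half h (2 * PI) (2 * PI - x).
Proof.
  unfold phi_per, phi_half; f_equal; apply Series_ext; intros k.
  rewrite <- phi_even; f_equal; rewrite S_INR; ring.
Qed.

Lemma is_derive_phi_per h x : 0 < h ->
  is_derive (phi_per h) x (dphi_half h (2 * PI) x - dphi_half h (2 * PI) (2 * PI - x)).
Proof.
  intros Hh; pose proof PI_RGT_0.
  apply (is_derive_ext (fun t => phi_half h (2 * PI) t + phi_half h (2 * PI) (2 * PI - t)));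
    [intros t; symmetry; apply phi_per_half|].
  apply (is_derive_plus (phi_half h (2 * PI)) (fun t => phi_half h (2 * PI) (2 * PI - t)) x).
  - apply is_derive_phi_half; lra.
  - replace (- dphi_half h (2 * PI) (2 * PI - x))
      with (scal (-1) (dphi_half h (2 * PI) (2 * PI - x)))
      by (unfold scal; simpl; unfold mult; simpl; ring).
    apply (is_derive_comp (phi_half h (2 * PI)) (fun t => 2 * PI - t));
      [apply is_derive_phi_half; lra|auto_derive; [easy|ring]].
Qed.

Lemma phi_trunc_of_nat h c x :
  phi_trunc h (Z.of_nat c) x = sum_n (fun k => phi h (x + 2 * PI * (INR k - INR c))) (2 * c).
Proof.
  unfold phi_trunc; replace (Z.of_nat c <? 0)%Z with false by (symmetry; apply Z.ltb_ge; lia).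
  rewrite Nat2Z.id; apply sum_n_ext; intros k.
  rewrite minus_IZR, <- !INR_IZR_INZ; reflexivity.
Qed.

Lemma is_derive_phi_trunc h c x : 0 < h ->
  is_derive (phi_trunc h (Z.of_nat c)) x
    (sum_n (fun k => dphi h (x + 2 * PI * (INR k - INR c))) (2 * c)).
Proof.
  intros Hh.
  apply (is_derive_ext (fun t => sum_n (fun k => phi h (t + 2 * PI * (INR k - INR c))) (2 * c)));
    [intros t; symmetry; apply phi_trunc_of_nat|].
  apply (@is_derive_sum_n _ R_NormedModule (fun k t => phi h (t + 2 * PI * (INR k - INR c))));
    intros k _; apply is_derive_shift, is_derive_phi, Hh.
Qed.

Lemma is_derive_conv_emp (K K' : R -> R) n xs x :
  (forall w, is_derive K w (K' w)) ->
  is_derive (conv_emp K n xs) x (/ INR n * sum_n (fun i => K' (x - xs i)) (pred n)).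
Proof.
  intros HK; apply is_derive_scal.
  apply (@is_derive_sum_n _ R_NormedModule (fun i t => K (t - xs i))); intros i _.
  exact (is_derive_shift K K' (- xs i) x HK).
Qed.

Lemma Rabs_sum_n_sub_le (u v : nat -> R) B m :
  (forall i, (i <= m)%nat -> Rabs (u i - v i) <= B) ->
  Rabs (sum_n u m - sum_n v m) <= INR (S m) * B.
Proof.
  induction m as [|m IH]; intros HB.
  - rewrite !sum_O; simpl INR; specialize (HB 0%nat (le_n 0)); lra.
  - rewrite !sum_Sn; change plus with Rplus.
    replace (sum_n u m + u (S m) - (sum_n v m + v (S m)))
      with ((sum_n u m - sum_n v m) + (u (S m) - v (S m))) by ring.
    eapply Rle_trans; [apply Rabs_triang|].
    rewrite (S_INR (S m)).
    specialize (IH (fun i Hi => HB i ltac:(lia))); specialize (HB (S m) (le_n _)); lra.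
Qed.

Theorem theorem10 (h : R) (C : Z) (n : nat) (xs : nat -> R) :
  0 < h ->
  (0 < n)%nat ->
  (forall i : nat, (i < n)%nat -> - PI <= xs i <= PI) ->
  2 * PI * (IZR C - 1) >= sqrt h ->
  forall x : R, - PI <= x <= PI ->
    Rabs (Derive (conv_emp (phi_per h) n xs) x
          - Derive (conv_emp (phi_trunc h C) n xs) x)
    <= / PI * phi h (2 * PI * (IZR C - 1)).
Proof.
  intros Hh Hn Hxs HC x Hx; pose proof PI_RGT_0; pose proof (sqrt_pos h).
  assert (HC0 : (0 <= C)%Z) by (apply le_IZR; nra).
  destruct (Z_of_nat_complete C HC0) as [c ->]; rewrite <- INR_IZR_INZ in *.
  rewrite (is_derive_unique _ _ _
             (is_derive_conv_emp _ _ n xs x (fun w => is_derive_phi_per h w Hh))).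
  rewrite (is_derive_unique _ _ _
             (is_derive_conv_emp _ _ n xs x (fun w => is_derive_phi_trunc h c w Hh))).
  assert (Hn' : 0 < INR n) by (apply lt_0_INR; lia).
  rewrite <- Rmult_minus_distr_l, Rabs_mult, Rabs_pos_eq by (apply Rlt_le, Rinv_0_lt_compat, Hn').
  apply (Rmult_le_reg_l (INR n)); [easy|].
  rewrite <- Rmult_assoc, Rinv_r, Rmult_1_l by lra.
  replace n with (S (pred n)) at 3 by lia.
  apply Rabs_sum_n_sub_le; intros i Hi.
  replace (/ PI) with (2 / (2 * PI)) by (field; lra).
  apply Rabs_dphi_half_sub_trunc_le; [easy|nra|lra|].
  specialize (Hxs i ltac:(lia)); lra.
Qed.
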